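(* Let $X$ be a compact topological space equipped with a continuous action of a strongly sofic monoid $M$, and let $\Sigma=(D_i,\sigma_i)_{i\in I}$ be a strong sofic approximation of $M$. Let $\rho$ and $\rho'$ be continuous pseudometrics on $X$ with $\rho'$ dynamically generating for $(X,M)$. Let $F\subset M$ be finite and $\delta>0$. Then there exist a finite subset $F'\subset M$, $\delta'>0$ and $i_0\in I$ such that $\operatorname{Map}(X,M,\rho',F',\delta',\sigma_i)\subset\operatorname{Map}(X,M,\rho,F,\delta,\sigma_i)$ for all $i\ge i_0$.
   Context: Hamming metric on $\operatorname{Map}(D)$ (maps $D\to D$, $D$ finite non-empty): $d_D^{\mathrm{Ham}}(f,g)=\frac{1}{|D|}|\{v:f(v)\ne g(v)\}|$. A strong sofic approximation of $M$ is a net $(D_i,\sigma_i)_{i\in I}$ over a directed set, $D_i$ non-empty finite, $\sigma_i\colon M\to\operatorname{Map}(D_i)$, with $\sigma_i(1_M)=\mathrm{Id}_{D_i}$; $\lim_i d^{\mathrm{Ham}}_{D_i}(\sigma_i(m_1m_2),\sigma_i(m_1)\sigma_i(m_2))=0$ for all $m_1,m_2$; $\lim_i d^{\mathrm{Ham}}_{D_i}(\sigma_i(m_1),\sigma_i(m_2))=1$ for distinct $m_1,m_2$; and for every finite $K\subset M$ an integer $\Delta_K\ge1$ with $|\sigma_i(k)^{-1}(v)|\le\Delta_K$ for all $i$, $k\in K$, $v\in D_i$. A monoid is strongly sofic iff it has one. A pseudometric $\rho'$ is dynamically generating if for distinct $x,y\in X$ some $m\in M$ has $\rho'(mx,my)>0$.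 For non-empty finite $D$ and a pseudometric $\rho$ on $X$, $\rho_2^D(\varphi,\psi)=(\frac{1}{|D|}\sum_{v\in D}\rho(\varphi(v),\psi(v))^2)^{1/2}$ on $X^D$, $(m\varphi)(v)=m\varphi(v)$, and for finite $F\subset M$, $\delta>0$, $\sigma\colon M\to\operatorname{Map}(D)$: $\operatorname{Map}(X,M,\rho,F,\delta,\sigma)=\{\varphi\in X^D:\rho_2^D(\varphi\circ\sigma(m),m\varphi)\le\delta\ \forall m\in F\}$. *)

From HB Require Import structures.
From mathcomp Require Import all_boot all_order all_algebra.
From mathcomp Require Import all_classical all_reals all_analysis.
Set Implicit Arguments. Unset Strict Implicit. Unset Printing Implicit Defensive.
Import Order.TTheory GRing.Theory Num.Theory.
Import numFieldNormedType.Exports.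
Local Open Scope classical_set_scope.
Local Open Scope ring_scope.

Definition is_monoid (M : Type) (mul : M -> M -> M) (one : M) : Prop :=
  [/\ forall a b c, mul a (mul b c) = mul (mul a b) c,
      forall a, mul one a = a & forall a, mul a one = a].

Definition is_cont_action (M : Type) (mul : M -> M -> M) (one : M)
  (X : topologicalType) (act : M -> X -> X) : Prop :=
  [/\ forall x, act one x = x,
      forall m1 m2 x, act (mul m1 m2) x = act m1 (act m2 x) &
      forall m, continuous (act m)].

Definition is_cont_pseudometric (R : realType) (X : topologicalType)
  (rho : X -> X -> R) : Prop :=
  [/\ forall x, rho x x = 0,
      forall x y, rho x y = rho y x,
      forall x y z, rho x z <= rho x y + rho y z,
      forall x y, 0 <= rho x y &
      continuous (fun p : X * X => rho p.1 p.2)].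

Definition dyn_generating (M : Type) (X : Type) (act : M -> X -> X)
  (R : realType) (rho : X -> X -> R) : Prop :=
  forall x y : X, x <> y -> exists m : M, 0 < rho (act m x) (act m y).

Definition is_directed (I : Type) (le : I -> I -> Prop) : Prop :=
  [/\ inhabited I, forall i, le i i,
      forall i j k, le i j -> le j k -> le i k &
      forall i j, exists k, le i k /\ le j k].

Definition net_lim (R : realType) (I : Type) (le : I -> I -> Prop)
  (f : I -> R) (l : R) : Prop :=
  forall eps : R, 0 < eps -> exists i0, forall i, le i0 i -> `|f i - l| < eps.

Definition d_ham (R : realType) (D : finType) (f g : D -> D) : R :=
  #|[set v : D | f v != g v]|%:R / #|D|%:R.

Definition strong_sofic_approx (R : realType) (M : Type) (mul : M -> M -> M)
  (one : M) (I : Type) (le : I -> I -> Prop) (D : I -> finType)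
  (sigma : forall i, M -> D i -> D i) : Prop :=
  [/\ forall i, (0 < #|D i|)%N,
      forall i (v : D i), sigma i one v = v,
      forall m1 m2, net_lim le
        (fun i => @d_ham R _ (sigma i (mul m1 m2)) (sigma i m1 \o sigma i m2)) 0,
      forall m1 m2, m1 <> m2 ->
        net_lim le (fun i => @d_ham R _ (sigma i m1) (sigma i m2)) 1 &
      forall K : set M, finite_set K -> exists Delta : nat, (1 <= Delta)%N /\
        forall i k (v : D i), K k ->
          (#|[set w : D i | sigma i k w == v]| <= Delta)%N].

Definition rho2 (R : realType) (X : Type) (rho : X -> X -> R) (D : finType)
  (phi psi : D -> X) : R :=
  Num.sqrt ((\sum_(v : D) rho (phi v) (psi v) ^+ 2) / #|D|%:R).

Definition Map_set (R : realType) (X : Type) (M : Type) (act : M -> X -> X)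
  (rho : X -> X -> R) (F : set M) (delta : R) (D : finType)
  (sigma : M -> D -> D) : set (D -> X) :=
  [set phi : D -> X | forall m, F m ->
     rho2 rho (fun v => phi (sigma m v)) (fun v => act m (phi v)) <= delta].

(* Since X is compact, rho is bounded by some C, and dynamical
   generation by rho' is uniform: there are a finite l in M and eta > 0 such
   that rho' (s x) (s y) < eta for all s in l forces rho x y < delta / 2.
   Take F' = l ∪ l F.  If phi is a good rho'-model on F', then for m in F and
   s in l the point phi (sigma_s (sigma_m v)) = phi (sigma_sm v) is
   eta/4-close both to s phi (sigma_m v) and to s m phi (v), so
   rho (phi (sigma_m v)) (m phi v) < delta / 2, except on a "bad" set of v.
   A Chebyshev bound, the bounded fibres of sigma_m and the approximate
   multiplicativity of sigma make the bad set a small proportion of D, and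
   as rho <= C it contributes little to rho_2. *)

From Stdlib Require List.
From HB Require Import structures.
From mathcomp Require Import all_boot all_order all_algebra.
From mathcomp Require Import all_classical all_reals all_analysis.
From mathcomp Require Import unstable ring lra.
Set Implicit Arguments. Unset Strict Implicit. Unset Printing Implicit Defensive.
Import Order.TTheory GRing.Theory Num.Theory.
Import numFieldNormedType.Exports.
Local Open Scope classical_set_scope.
Local Open Scope ring_scope.

Lemma finite_set_seq (T : Type) (A : set T) : finite_set A ->
  exists s : seq T, forall x, A x <-> List.In x s.
Proof.
have In_classic (x : {classic T}) (s : seq {classic T}) :
    x \in s <-> List.In x s.
  elim: s => [|a s IH] //=; rewrite in_cons; split.
    by case/orP => [/eqP ->|/IH]; [left | right].
  by case=> [->|/IH ->]; rewrite ?eqxx ?orbT.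
move=> /(@finite_fsetP {classic T}) [S ->]; exists (finmap.enum_fset S) => x.
by rewrite -In_classic.
Qed.

Lemma finite_set_In (T : Type) (s : seq T) : finite_set [set x | List.In x s].
Proof.
elim: s => [|a s IH].
  by rewrite (_ : [set x | _] = set0) //; exact: finite_set0.
rewrite (_ : [set x | _] = [set a] `|` [set x | List.In x s]).
  by rewrite finite_setU; split; [exact: finite_set1 |].
by apply/seteqP; split=> x /= [->|]; by [left | right].
Qed.

Lemma mem_bigcup_In (I : Type) (T : finType) (F : I -> {set T}) (r : seq I)
    i x :
  List.In i r -> x \in F i -> x \in \bigcup_(j <- r) F j.
Proof.
elim: r => [|a r IH] //= [->|/IH x_in] x_Fi; rewrite big_cons inE ?x_Fi //.
by rewrite x_in // orbT.
Qed.

Lemma ler_sum_In_const (R : realType) (I : Type) (h : I -> R) (r : seq I)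
    (K : R) :
  (forall i, List.In i r -> h i <= K) -> \sum_(i <- r) h i <= (size r)%:R * K.
Proof.
elim: r => [|a r IH] h_le; first by rewrite big_nil mul0r.
rewrite big_cons /= -addn1 natrD mulrDl mul1r addrC.
by apply: lerD; [apply: IH => i ri; apply: h_le; right | apply: h_le; left].
Qed.

Lemma ex_In_lb_gt0 (R : realType) (J : Type) (g : J -> R) (s : seq J) :
  (forall j, 0 < g j) -> exists2 b, 0 < b & forall j, List.In j s -> b <= g j.
Proof.
move=> g_gt0; elim: s => [|a s [b b_gt0 b_le]]; first by exists 1.
exists (Num.min (g a) b); first by rewrite lt_min g_gt0 b_gt0.
by move=> j /= [<-|/b_le le_bg]; rewrite ge_min ?lexx // le_bg orbT.
Qed.

Lemma eventually_forall_finite (I J : Type) (le : I -> I -> Prop)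
    (A : set J) (P : J -> I -> Prop) :
  is_directed le -> finite_set A ->
  (forall j, A j -> exists i0, forall i, le i0 i -> P j i) ->
  exists i0, forall i, le i0 i -> forall j, A j -> P j i.
Proof.
move=> [[i1] _ le_trans le_ub] /finite_set_seq[s A_s] eventually_P.
suff [i0 P_s] : exists i0, forall i, le i0 i -> forall j, List.In j s -> P j i.
  by exists i0 => i i0_le j /A_s; exact: P_s.
have {}eventually_P j : List.In j s -> exists i0, forall i, le i0 i -> P j i.
  by move=> /A_s; exact: eventually_P.
elim: s {A_s} eventually_P => [|a s IH] eventually_P; first by exists i1.
have [i2 P_s] := IH (fun j j_s => eventually_P j (or_intror j_s)).
have [i3 P_a] := eventually_P a (or_introl erefl).
have [k [i2_le i3_le]] := le_ub i2 i3.
exists k => i k_le j /= [<-|j_s]; first exact/P_a/(le_trans _ _ _ i3_le k_le).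
exact/P_s/j_s/(le_trans _ _ _ i2_le k_le).
Qed.

Lemma eventually_d_ham_mul_le (R : realType) (M I : Type) (mul : M -> M -> M)
    (le : I -> I -> Prop) (D : I -> finType) (sigma : forall i, M -> D i -> D i)
    (A B : set M) (kappa : R) :
  is_directed le ->
  (forall m1 m2, net_lim le
    (fun i => d_ham R (sigma i (mul m1 m2)) (sigma i m1 \o sigma i m2)) 0) ->
  finite_set A -> finite_set B -> 0 < kappa ->
  exists i0, forall i, le i0 i -> forall s m, A s -> B m ->
    d_ham R (sigma i (mul s m)) (sigma i s \o sigma i m) <= kappa.
Proof.
move=> le_directed sigma_mul A_fin B_fin kappa_gt0.
have [|i0 d_ham_le] := @eventually_forall_finite _ _ le (A `*` B)
  (fun sm i =>
    d_ham R (sigma i (mul sm.1 sm.2)) (sigma i sm.1 \o sigma i sm.2) <= kappa)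
  le_directed (finite_setX A_fin B_fin).
  case=> s m _; have [i1 d_ham_small] := sigma_mul s m kappa kappa_gt0.
  exists i1 => i /d_ham_small; rewrite subr0 => /(le_lt_trans (ler_norm _)).
  exact: ltW.
by exists i0 => i i0_le s m As Bm; exact: (d_ham_le i i0_le (s, m)).
Qed.

Lemma compact_finite_subcover (Y : topologicalType) (J : Type)
    (U : J -> set Y) :
  compact [set: Y] -> (forall j, open (U j)) -> (forall y, exists j, U j y) ->
  exists s : seq J, forall y, exists2 j, List.In j s & U j y.
Proof.
move=> /compact_near_coveringP Ycpt U_open U_cover.
(* Compactness along the filter of lists containing a given finite list. *)
pose G (P : set (seq J)) := exists s0 : seq J,
  forall s, (forall j, List.In j s0 -> List.In j s) -> P s.
have G_filter : Filter G.
  split; first by exists [::].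
  - move=> P Q [s0 Ps0] [s1 Qs1]; exists (s0 ++ s1) => s s_sup.
    by split; [apply: Ps0 | apply: Qs1] => j j_in; apply: s_sup;
      apply: List.in_or_app; [left | right].
  - by move=> P Q PQ [s0 Ps0]; exists s0 => s /Ps0/PQ.
have [y _|s0 covered] :=
  Ycpt _ G (fun s y => exists2 j, List.In j s & U j y) G_filter.
  have [j Ujy] := U_cover y.
  exists (U j, [set s | List.In j s]).
    split=> /=; first by apply: open_nbhs_nbhs; split.
    by exists [:: j] => s; apply; left.
  by case=> y' s /= [Ujy' js]; exists j.
by exists s0 => y; exact: (covered s0 (fun j h => h) y I).
Qed.

Lemma compact_pseudometric_bounded (R : realType) (X : topologicalType)
    (rho : X -> X -> R) :
  compact [set: X] -> continuous (fun p : X * X => rho p.1 p.2) ->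
  exists2 C, 0 < C & forall x y, rho x y <= C.
Proof.
move=> X_cpt rho_cont.
have XX_cpt : compact [set: X * X] by rewrite -setXTT; exact: compact_setX.
have /compact_bounded/pinfty_ex_gt0[C C_gt0 C_bound] :=
  continuous_compact (continuous_subspaceT rho_cont) XX_cpt.
exists C => // x y; apply: le_trans (ler_norm _) (C_bound _ _).
by exists (x, y).
Qed.

Lemma continuous_pseudometric_act (R : realType) (X : topologicalType)
    (f : X -> X) (rho : X -> X -> R) :
  continuous f -> continuous (fun p : X * X => rho p.1 p.2) ->
  continuous (fun p : X * X => rho (f p.1) (f p.2)).
Proof.
move=> f_cont rho_cont p.
have ff_cont : continuous (fun p : X * X => (f p.1, f p.2)).
  move=> q; apply: cvg_pair.
    exact: (cvg_comp fst f cvg_fst (f_cont q.1)).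
  exact: (cvg_comp snd f cvg_snd (f_cont q.2)).
exact: (continuous_comp (ff_cont p) (rho_cont _)).
Qed.

Lemma dyn_generating_uniform (R : realType) (X : topologicalType) (M : Type)
    (act : M -> X -> X) (rho rho' : X -> X -> R) (eps : R) :
  compact [set: X] -> (forall m, continuous (act m)) ->
  continuous (fun p : X * X => rho p.1 p.2) ->
  continuous (fun p : X * X => rho' p.1 p.2) ->
  (forall x, rho x x = 0) -> dyn_generating act rho' -> 0 < eps ->
  exists l : seq M, exists2 eta, 0 < eta & forall x y,
    (forall s, List.In s l -> rho' (act s x) (act s y) < eta) -> rho x y < eps.
Proof.
move=> X_cpt act_cont rho_cont rho'_cont rho_xx dyn_gen eps_gt0.
have XX_cpt : compact [set: X * X] by rewrite -setXTT; exact: compact_setX.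
pose U (j : option (M * {posnum R})) : set (X * X) := match j with
  | None => [set p | rho p.1 p.2 < eps]
  | Some (m, r) => [set p | r%:num < rho' (act m p.1) (act m p.2)] end.
have U_open j : open (U j).
  case: j => [[m r]|] /=.
    apply: (@open_comp _ _ (fun p : X * X => rho' (act m p.1) (act m p.2))
      [set t | r%:num < t]); last exact: open_gt.
    by move=> p _; exact: (continuous_pseudometric_act (act_cont m) rho'_cont).
  apply: (@open_comp _ _ (fun p : X * X => rho p.1 p.2) [set t | t < eps]).
    by move=> p _; exact: rho_cont.
  exact: open_lt.
have U_cover p : exists j, U j p.
  case: p => x y; have [|eps_le] := ltP (rho x y) eps; first by exists None.
  have [|m m_sep] := dyn_gen x y.
    by move=> xy; move: eps_le; rewrite xy rho_xx leNgt eps_gt0.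
  have half_gt0 : 0 < rho' (act m x) (act m y) / 2 by rewrite divr_gt0.
  exists (Some (m, PosNum half_gt0)).
  by rewrite /= ltr_pdivrMr // ltr_pMr // ltr1n.
have [js js_cover] := compact_finite_subcover XX_cpt U_open U_cover.
pose radius (j : option (M * {posnum R})) : R :=
  if j is Some (_, r) then r%:num else 1.
have radius_gt0 j : 0 < radius j by case: j => [[? ?]|] /=.
have [eta eta_gt0 eta_le] := ex_In_lb_gt0 js radius_gt0.
exists (pmap (omap fst) js), eta => // x y close.
have [[[m r]|] j_in Ujxy] := js_cover (x, y); last by [].
have m_in : List.In m (pmap (omap fst) js).
  move: j_in; elim: (js) => [|a ks IH] //= [->|/IH m_in]; first by left.
  by case: a => [[? ?]|] //=; right.
have := lt_le_trans (close m m_in) (eta_le _ j_in).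
by rewrite ltNge (ltW Ujxy).
Qed.

Lemma card_classical_set (D : finType) (b : pred D) :
  #|[set v | b v]| = #|[set v | b v]%SET|.
Proof.
by apply: eq_card => v; rewrite finset.inE; apply/idP/idP; rewrite in_setE.
Qed.

Lemma card_preimset_le (D : finType) (f : D -> D) (B : {set D}) (Delta : nat) :
  (forall w, #|[set v | f v == w]%SET| <= Delta)%N ->
  (#|f @^-1: B| <= Delta * #|B|)%N.
Proof.
move=> fibre_le; rewrite -sum1_card (partition_big f (mem B)) /=; last first.
  by move=> v; rewrite inE.
rewrite mulnC -sum_nat_const; apply: leq_sum => w _.
rewrite sum1dep_card; apply: leq_trans (fibre_le w); apply: subset_leq_card.
by apply/fintype.subsetP => v; rewrite !inE => /andP[_ ->].
Qed.

Lemma sum_indicator (R : realType) (D : finType) (A : {set D}) :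
  \sum_v ((v \in A)%:R : R) = #|A|%:R.
Proof.
rewrite -[RHS]sumr_const [RHS]big_mkcond /=.
by apply: eq_bigr => v _; case: (v \in A).
Qed.

Lemma card_gt_le_rho2 (R : realType) (X : Type) (rho : X -> X -> R)
    (D : finType) (phi psi : D -> X) (t c : R) :
  (0 < #|D|)%N -> (forall x y, 0 <= rho x y) -> 0 < t -> 0 <= c <= 1 ->
  rho2 rho phi psi <= t * c ->
  #|[set v | t < rho (phi v) (psi v)]%SET|%:R <= c * #|D|%:R.
Proof.
move=> D_gt0 rho_ge0 t_gt0 /andP[c_ge0 c_le1] rho2_le.
have n_gt0 : 0 < #|D|%:R :> R by rewrite ltr0n.
have sum_le : \sum_v rho (phi v) (psi v) ^+ 2 <= (t * c) ^+ 2 * #|D|%:R.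
  have mean_ge0 : 0 <= (\sum_v rho (phi v) (psi v) ^+ 2) / #|D|%:R.
    by rewrite divr_ge0 ?sumr_ge0 // => v _; rewrite sqr_ge0.
  rewrite -ler_pdivrMr // -(sqr_sqrtr mean_ge0) ler_pXn2r ?nnegrE ?sqrtr_ge0 //.
  exact: le_trans (sqrtr_ge0 _) rho2_le.
have markov : #|[set v | t < rho (phi v) (psi v)]%SET|%:R * t ^+ 2
    <= \sum_v rho (phi v) (psi v) ^+ 2.
  rewrite -sum_indicator mulr_suml; apply: ler_sum => v _; rewrite inE.
  case: ltP => [lt_t|_]; last by rewrite mul0r sqr_ge0.
  by rewrite mul1r ler_pXn2r ?nnegrE ?rho_ge0 // ltW.
rewrite -(ler_pM2r (exprn_gt0 2 t_gt0)).
apply: le_trans markov (le_trans sum_le _).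
rewrite exprMn -mulrA [X in _ <= X]mulrC ler_wpM2l ?sqr_ge0 //.
rewrite ler_wpM2r ?ler0n //.
by rewrite expr2 ler_piMl.
Qed.

Lemma error_budget_le (R : realType) (C delta N Delta kappa c n : R) :
  0 <= N -> 0 <= Delta -> 0 <= c -> 0 <= n ->
  (Delta + 1) * c <= kappa -> 4 * C ^+ 2 * (N + 1) * kappa <= delta ^+ 2 ->
  n * (delta / 2) ^+ 2 + C ^+ 2 * (N * ((Delta * c + kappa + c) * n))
    <= delta ^+ 2 * n.
Proof.
move=> N_ge0 Delta_ge0 c_ge0 n_ge0 c_le kappa_le.
have kappa_ge0 : 0 <= kappa.
  by apply: le_trans c_le; rewrite mulr_ge0 // addr_ge0.
have C2_ge0 : 0 <= C ^+ 2 by exact: sqr_ge0.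
have sum_le : Delta * c + kappa + c <= 2 * kappa by lra.
have NC_le : 2 * (C ^+ 2 * kappa) * N <= delta ^+ 2 / 2.
  have : 0 <= C ^+ 2 * kappa by exact: mulr_ge0.
  nra.
have : C ^+ 2 * (N * ((Delta * c + kappa + c) * n))
    <= 2 * (C ^+ 2 * kappa) * N * n.
  rewrite [X in _ <= X](_ : _ = C ^+ 2 * (N * ((2 * kappa) * n))); last by ring.
  by rewrite ler_wpM2l // ler_wpM2l // ler_wpM2r.
have : 2 * (C ^+ 2 * kappa) * N * n <= delta ^+ 2 / 2 * n by rewrite ler_wpM2r.
have -> : n * (delta / 2) ^+ 2 = delta ^+ 2 * n / 4 by field.
have -> : delta ^+ 2 / 2 * n = delta ^+ 2 * n / 2 by field.
have : 0 <= delta ^+ 2 * n by rewrite mulr_ge0 ?sqr_ge0.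
lra.
Qed.

Lemma ex_error_budget (R : realType) (C delta N Delta : R) :
  0 < C -> 0 < delta -> 0 <= N -> 0 <= Delta ->
  exists kappa c, [/\ 0 < kappa, 0 < c, c <= 1, (Delta + 1) * c <= kappa
    & 4 * C ^+ 2 * (N + 1) * kappa <= delta ^+ 2].
Proof.
move=> C_gt0 delta_gt0 N_ge0 Delta_ge0.
have den_gt0 : 0 < 4 * C ^+ 2 * (N + 1).
  by rewrite !mulr_gt0 ?exprn_gt0 //; lra.
pose kappa := delta ^+ 2 / (4 * C ^+ 2 * (N + 1)).
have kappa_gt0 : 0 < kappa by rewrite divr_gt0 ?exprn_gt0.
have Delta1_gt0 : 0 < Delta + 1 by lra.
exists kappa, (Num.min 1 (kappa / (Delta + 1))); split => //.
- by rewrite lt_min ltr01 divr_gt0.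
- by rewrite ge_min lexx.
- by rewrite mulrC -ler_pdivlMr // ge_min lexx orbT.
- by rewrite mulrC /kappa mulrVK // unitfE gt_eqF.
Qed.

Section MapSetInclusion.
Variables (R : realType) (X M : Type) (mul : M -> M -> M) (act : M -> X -> X)
  (rho rho' : X -> X -> R).
Hypothesis act_mul : forall s m x, act (mul s m) x = act s (act m x).
Hypothesis rho_ge0 : forall x y, 0 <= rho x y.
Hypothesis rho'_ge0 : forall x y, 0 <= rho' x y.
Hypothesis rho'_sym : forall x y, rho' x y = rho' y x.
Hypothesis rho'_triangle : forall x y z, rho' x z <= rho' x y + rho' y z.
Variables (C delta eta : R) (l : seq M).
Hypothesis rho_le : forall x y, rho x y <= C.
Hypothesis delta_gt0 : 0 < delta.
Hypothesis eta_gt0 : 0 < eta.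
Hypothesis rho_lt_half_delta : forall x y,
  (forall s, List.In s l -> rho' (act s x) (act s y) < eta) ->
  rho x y < delta / 2.
Variables (D : finType) (sg : M -> D -> D).

Definition far_set (phi : D -> X) (s : M) : {set D} :=
  [set w | eta / 4 < rho' (phi (sg s w)) (act s (phi w))]%SET.

Definition defect_set (s m : M) : {set D} :=
  [set v | sg (mul s m) v != sg s (sg m v)]%SET.

Definition bad_set (phi : D -> X) (m : M) : {set D} :=
  \bigcup_(s <- l)
    (sg m @^-1: far_set phi s :|: defect_set s m :|: far_set phi (mul s m)).

(* [phi (sg s (sg m v)) = phi (sg (mul s m) v)] is [eta / 4]-close to both
   [act s (phi (sg m v))] and [act (mul s m) (phi v)]. *)
Lemma rho_lt_off_bad_set phi m v : v \notin bad_set phi m ->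
  rho (phi (sg m v)) (act m (phi v)) < delta / 2.
Proof.
move=> v_good; apply: rho_lt_half_delta => s s_in.
have : v \notin
    sg m @^-1: far_set phi s :|: defect_set s m :|: far_set phi (mul s m).
  by apply: contra v_good; exact: (mem_bigcup_In s_in).
rewrite !inE negb_or negb_or negbK -!leNgt.
move=> /andP[/andP[far_m /eqP sg_mul] far_sm].
rewrite -act_mul (le_lt_trans (rho'_triangle _ (phi (sg s (sg m v))) _)) //.
rewrite rho'_sym; rewrite sg_mul in far_sm.
by apply: le_lt_trans (lerD far_m far_sm) _; move: eta_gt0; lra.
Qed.

Lemma sum_rho_sq_le phi m :
  \sum_v rho (phi (sg m v)) (act m (phi v)) ^+ 2
    <= #|D|%:R * (delta / 2) ^+ 2 + C ^+ 2 * #|bad_set phi m|%:R.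
Proof.
have pointwise v : rho (phi (sg m v)) (act m (phi v)) ^+ 2
    <= (delta / 2) ^+ 2 + C ^+ 2 * (v \in bad_set phi m)%:R.
  have [_|v_good] := boolP (v \in bad_set phi m).
    rewrite mulr1; apply: ler_wpDl; first exact: sqr_ge0.
    have C_ge0 : 0 <= C := le_trans (rho_ge0 (phi v) (phi v)) (rho_le _ _).
    by rewrite ler_pXn2r ?nnegrE ?rho_ge0.
  rewrite mulr0n mulr0 addr0 ler_pXn2r ?nnegrE //.
    exact: ltW (rho_lt_off_bad_set v_good).
  by rewrite divr_ge0 // ltW.
apply: le_trans (ler_sum _ (fun v _ => pointwise v)) _.
rewrite big_split /= -[X in _ + X <= _]mulr_sumr sum_indicator.
by rewrite sumr_const cardT -cardE mulr_natl.
Qed.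

Lemma card_bad_set_le phi m (Delta : nat) (kappa c : R) :
  (forall w, #|[set v | sg m v == w]%SET| <= Delta)%N ->
  (forall s, List.In s l -> #|far_set phi s|%:R <= c * #|D|%:R) ->
  (forall s, List.In s l -> #|defect_set s m|%:R <= kappa * #|D|%:R) ->
  (forall s, List.In s l -> #|far_set phi (mul s m)|%:R <= c * #|D|%:R) ->
  #|bad_set phi m|%:R <= (size l)%:R * ((Delta%:R * c + kappa + c) * #|D|%:R).
Proof.
move=> fibre_le far_le defect_le far_mul_le.
apply: le_trans (_ : _ <= \sum_(s <- l) #|sg m @^-1: far_set phi s
  :|: defect_set s m :|: far_set phi (mul s m)|%:R) _.
  by rewrite -natr_sum ler_nat card_big_setU.
apply: ler_sum_In_const => s s_in.
apply: le_trans (_ : _ <= #|sg m @^-1: far_set phi s|%:R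
  + #|defect_set s m|%:R + #|far_set phi (mul s m)|%:R) _.
  rewrite -!natrD ler_nat (leq_trans (leq_card_setU _ _)) //.
  by rewrite leq_add2r leq_card_setU.
rewrite !mulrDl; apply: lerD; last exact: far_mul_le.
apply: lerD; last exact: defect_le.
rewrite -mulrA; apply: le_trans (ler_wpM2l (ler0n _ _) (far_le s s_in)).
by rewrite -natrM ler_nat card_preimset_le.
Qed.

Lemma Map_set_subset (F F' : set M) (Delta : nat) (kappa c : R) :
  (0 < #|D|)%N -> 0 <= c <= 1 -> (Delta%:R + 1) * c <= kappa ->
  4 * C ^+ 2 * ((size l)%:R + 1) * kappa <= delta ^+ 2 ->
  (forall s, List.In s l -> F' s) ->
  (forall s m, List.In s l -> F m -> F' (mul s m)) ->
  (forall m w, F m -> (#|[set v | sg m v == w]%SET| <= Delta)%N) ->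
  (forall s m, List.In s l -> F m ->
    d_ham R (sg (mul s m)) (sg s \o sg m) <= kappa) ->
  Map_set act rho' F' (eta / 4 * c) sg `<=` Map_set act rho F delta sg.
Proof.
move=> D_gt0 c_bounds c_le kappa_le l_sub lF_sub fibre_le d_ham_le.
move=> phi phi_model m Fm.
have n_gt0 : 0 < #|D|%:R :> R by rewrite ltr0n.
have far_le s : F' s -> #|far_set phi s|%:R <= c * #|D|%:R.
  by move=> /phi_model; apply: card_gt_le_rho2; rewrite ?divr_gt0.
have defect_le s : List.In s l -> #|defect_set s m|%:R <= kappa * #|D|%:R.
  move=> s_in; have := d_ham_le s m s_in Fm.
  by rewrite /d_ham card_classical_set ler_pdivrMr.
have bad_le := card_bad_set_le (fibre_le m ^~ Fm)
  (fun s s_in => far_le s (l_sub s s_in)) defect_le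
  (fun s s_in => far_le _ (lF_sub s m s_in Fm)).
rewrite /rho2 -(ger0_norm (ltW delta_gt0)) -sqrtr_sqr ler_sqrt ?sqr_ge0 //.
rewrite ler_pdivrMr //; apply: le_trans (sum_rho_sq_le phi m) _.
apply: le_trans (lerD (lexx _) (ler_wpM2l (sqr_ge0 C) bad_le)) _.
case/andP: c_bounds => c_ge0 _.
by apply: error_budget_le; rewrite ?ler0n.
Qed.
End MapSetInclusion.

Theorem lemma4p5 (R : realType) (M : Type) (mul : M -> M -> M) (one : M)
  (X : topologicalType) (act : M -> X -> X)
  (I : Type) (le : I -> I -> Prop) (D : I -> finType)
  (sigma : forall i, M -> D i -> D i)
  (rho rho' : X -> X -> R) (F : set M) (delta : R) :
  is_monoid mul one ->
  compact [set: X] ->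
  is_cont_action mul one act ->
  is_directed le ->
  strong_sofic_approx R mul one le sigma ->
  is_cont_pseudometric rho -> is_cont_pseudometric rho' ->
  dyn_generating act rho' ->
  finite_set F -> 0 < delta ->
  exists (F' : set M) (delta' : R) (i0 : I),
    [/\ finite_set F', 0 < delta' &
      forall i, le i0 i ->
        Map_set act rho' F' delta' (sigma i) `<=` Map_set act rho F delta (sigma i)].
Proof.
move=> _ X_cpt [_ act_mul act_cont] le_directed
  [D_gt0 _ sigma_mul _ sigma_fibre] [rho_xx _ _ rho_ge0 rho_cont]
  [_ rho'_sym rho'_tri rho'_ge0 rho'_cont] dyn_gen F_fin delta_gt0.
have [C C_gt0 rho_le] := compact_pseudometric_bounded X_cpt rho_cont.
have half_delta_gt0 : 0 < delta / 2 by rewrite divr_gt0.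
have [l [eta eta_gt0 rho_small]] := dyn_generating_uniform X_cpt act_cont
  rho_cont rho'_cont rho_xx dyn_gen half_delta_gt0.
have [Delta [_ fibre_le]] := sigma_fibre F F_fin.
have [kappa [c [kappa_gt0 c_gt0 c_le1 c_le kappa_le]]] :=
  ex_error_budget C_gt0 delta_gt0 (ler0n R (size l)) (ler0n R Delta).
pose L := [set s | List.In s l].
have [i0 d_ham_le] := eventually_d_ham_mul_le le_directed sigma_mul
  (finite_set_In l) F_fin kappa_gt0.
exists (L `|` [set mul s m | s in L & m in F]), (eta / 4 * c), i0; split.
- rewrite finite_setU; split; first exact: finite_set_In.
  exact: finite_image2 (finite_set_In l) F_fin.
- by rewrite mulr_gt0 ?divr_gt0.
move=> i i0_le.
apply: (Map_set_subset act_mul rho_ge0 rho'_ge0 rho'_sym rho'_tri rho_le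
  delta_gt0 eta_gt0 rho_small (Delta := Delta) (kappa := kappa)) => //.
- by rewrite (ltW c_gt0).
- by move=> s s_in; left.
- by move=> s m s_in Fm; right; exists s => //; exists m.
- by move=> m w Fm; rewrite -card_classical_set fibre_le.
- exact: d_ham_le.
Qed.
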